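(* Let $A_1,A_2\in\mathbb{R}^{2\times2}$ and suppose $A_1$ has two distinct eigenvalues. Then there exists $T\in GL(2,\mathbb{R})$ such that: (i) if $A_1$ has real eigenvalues and $\det[A_1,A_2]\ne0$, then $TA_1T^{-1}=\begin{pmatrix}\lambda_1&0\\0&\lambda_2\end{pmatrix}$ and $TA_2T^{-1}=\begin{pmatrix}s_{21}&t_2\\t_2&s_{22}\end{pmatrix}$ or $\begin{pmatrix}s_{21}&-t_2\\t_2&s_{22}\end{pmatrix}$ for some $\lambda_j,s_{2j},t_2\in\mathbb{R}$, $j=1,2$; (ii) if $A_1$ has non-real eigenvalues, then $TA_1T^{-1}=\begin{pmatrix}s_1&-t_1\\t_1&s_1\end{pmatrix}$ and $TA_2T^{-1}=\begin{pmatrix}s_{21}&-t_2\\t_2&s_{22}\end{pmatrix}$ for some $s_1,t_1,s_{21},s_{22},t_2\in\mathbb{R}$.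
   Context: $[A,B]=AB-BA$. *)

(* Real matrices over an arbitrary real closed field R
   (covers R = the reals); eigenvalues are taken in R[i] = complex R. *)
From HB Require Import structures.
From mathcomp Require Import all_boot all_order all_algebra.
From mathcomp Require Import complex.
Set Implicit Arguments. Unset Strict Implicit. Unset Printing Implicit Defensive.
Import Order.TTheory GRing.Theory Num.Theory.
Local Open Scope ring_scope.

Definition mx2 {R : Type} (a b c d : R) : 'M[R]_2 :=
  \matrix_(i < 2, j < 2)
     if i == 0 :> nat then (if j == 0 :> nat then a else b)
     else (if j == 0 :> nat then c else d).

Definition commmx {R : pzRingType} {n : nat} (A B : 'M[R]_n) : 'M[R]_n :=
  A *m B - B *m A.

Definition cplx_mx {R : rcfType} {n : nat} (A : 'M[R]_n) : 'M[R[i]]_n :=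
  map_mx (fun x : R => Complex x 0) A.

Definition ceigenvalue {R : rcfType} {n : nat} (A : 'M[R]_n.+1) (l : R[i]) : bool :=
  eigenvalue (cplx_mx A) l.

(* Write A1 = [[a, b], [c, d]] and let discr = (a - d)^2 + 4bc be the discriminant
   of its characteristic polynomial.  If discr < 0, A1 is similar to a
   rotation-scaling matrix [[s, -t], [t, s]]; every matrix [[al, -be], [be, al]]
   commutes with it, and a suitable one conjugates A2 into a matrix whose
   off-diagonal entries are opposite.  If discr >= 0 the eigenvalues are real,
   and since they are distinct discr > 0, so A1 is diagonalizable.  In an
   eigenbasis det [A1, A2] = (l1 - l2)^2 y z, where y, z are the off-diagonal
   entries of A2, so y z <> 0 and a diagonal rescaling equalizes |y| and |z|. *)

From HB Require Import structures.
From mathcomp Require Import all_boot all_order all_algebra.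
From mathcomp Require Import complex ring lra.
Import Order.TTheory GRing.Theory Num.Theory.
Local Open Scope ring_scope.

Section Mx2Ring.
Context {R : comNzRingType}.

Lemma mx2E (M : 'M[R]_2) : M = mx2 (M 0 0) (M 0 1) (M 1 0) (M 1 1).
Proof.
apply/matrixP => i j; rewrite mxE.
by case: i j => [[|[|//]] ?] [[|[|//]] ?]; congr (M _ _); apply: val_inj.
Qed.

Lemma mulmx_mx2 (a b c d a' b' c' d' : R) : mx2 a b c d *m mx2 a' b' c' d' =
  mx2 (a * a' + b * c') (a * b' + b * d') (c * a' + d * c') (c * b' + d * d').
Proof.
apply/matrixP => i j; rewrite !mxE !big_ord_recl big_ord0 addr0 !mxE /=.
by case: i j => [[|[|//]] ?] [[|[|//]] ?].
Qed.

Lemma det_mx2 (a b c d : R) : \det (mx2 a b c d) = a * d - b * c.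
Proof.
rewrite (expand_det_row _ ord0) !big_ord_recl big_ord0 /cofactor !det_mx11 !mxE /=.
by rewrite addr0 expr0 mul1r expr1 mulN1r mulrN.
Qed.

Lemma mx2_1 : 1%:M = mx2 1 0 0 1 :> 'M[R]_2.
Proof. by apply/matrixP => i j; rewrite !mxE; case: i j => [[|[|//]] ?] [[|[|//]] ?]. Qed.

Lemma commmx_diag_mx2 (l1 l2 x y z w : R) :
  commmx (mx2 l1 0 0 l2) (mx2 x y z w) = mx2 0 ((l1 - l2) * y) ((l2 - l1) * z) 0.
Proof.
rewrite /commmx !mulmx_mx2; apply/matrixP => i j; rewrite !mxE.
by case: i j => [[|[|//]] ?] [[|[|//]] ?] /=; ring.
Qed.

Lemma det_commmx_diag (l1 l2 : R) (B : 'M[R]_2) :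
  \det (commmx (mx2 l1 0 0 l2) B) = (l1 - l2) ^+ 2 * (B 0 1 * B 1 0).
Proof. by rewrite [B]mx2E commmx_diag_mx2 det_mx2 !mxE /=; ring. Qed.

End Mx2Ring.

Section FieldMatrices.
Context {F : fieldType}.

Lemma unitmx_mx2 (a b c d : F) : (mx2 a b c d \in unitmx) = (a * d - b * c != 0).
Proof. by rewrite unitmxE det_mx2 unitfE. Qed.

Lemma invmx_mx2 (a b c d : F) : a * d - b * c != 0 ->
  invmx (mx2 a b c d) = (a * d - b * c)^-1 *: mx2 d (- b) (- c) a.
Proof.
move=> nz; set B := _ *: _.
have AB : mx2 a b c d *m B = 1%:M.
  rewrite /B -scalemxAr mulmx_mx2 mx2_1; apply/matrixP => i j; rewrite !mxE.
  by case: i j => [[|[|//]] ?] [[|[|//]] ?] /=; field.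
have [uA _] := mulmx1_unit AB.
by rewrite -[invmx _]mulmx1 -AB mulmxA mulVmx // mul1mx.
Qed.

Lemma conjmx_eq {n} (T X Y : 'M[F]_n) : T \in unitmx -> T *m X = Y *m T -> conjmx T X = Y.
Proof. by move=> uT TX; rewrite conjumx // TX mulmxK. Qed.

Lemma conjmx_commmx {n} (T X Y : 'M[F]_n) : T \in unitmx ->
  conjmx T (commmx X Y) = commmx (conjmx T X) (conjmx T Y).
Proof.
by move=> uT; rewrite !conjumx // /commmx mulmxBr mulmxBl !mulmxA !mulmxKV // !mulmxA.
Qed.

Lemma det_conjmx {n} (T X : 'M[F]_n) : T \in unitmx -> \det (conjmx T X) = \det X.
Proof.
by move=> uT; rewrite conjumx // !det_mulmx det_inv mulrC mulrA mulVf ?mul1r // -unitfE -unitmxE.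
Qed.

Lemma eigenvalue_det {n} (A : 'M[F]_n) a : eigenvalue A a = (\det (a%:M - A) == 0).
Proof.
apply/eigenvalueP/det0P => [[v Av_av v_nz] | [v v_nz Av_av]]; exists v => //.
  by rewrite mulmxBr Av_av mul_mx_scalar subrr.
by apply/eqP; rewrite -mul_mx_scalar eq_sym -subr_eq0 -mulmxBr Av_av.
Qed.

End FieldMatrices.

Lemma ceigenvalue_mx2 {R : rcfType} (a b c d x y : R) :
  ceigenvalue (mx2 a b c d) (Complex x y) =
  (x ^+ 2 - y ^+ 2 - (a + d) * x + (a * d - b * c) == 0) && ((2 * x - (a + d)) * y == 0).
Proof.
rewrite /ceigenvalue eigenvalue_det.
have -> : (Complex x y)%:M - cplx_mx (mx2 a b c d) =
    mx2 (Complex (x - a) y) (Complex (- b) 0) (Complex (- c) 0) (Complex (x - d) y).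
  apply/matrixP => i j; rewrite !mxE.
  by case: i j => [[|[|//]] ?] [[|[|//]] ?] /=; simpc.
rewrite det_mx2; simpc; rewrite eq_complex /=.
by congr (_ && _); congr (_ == _); ring.
Qed.

Section RealClosed.
Context {R : rcfType}.

Definition mx2_discr (a b c d : R) := (a - d) ^+ 2 + 4 * b * c.

Section Discriminant.
Context {a b c d : R}.
Local Notation discr := (mx2_discr a b c d).
Local Notation A := (mx2 a b c d).

Lemma ceigenvalue_mx2_real : 0 <= discr -> forall l, ceigenvalue A l -> complex.Im l = 0.
Proof.
move=> discr_ge0 [x y] /=; rewrite ceigenvalue_mx2 mulf_eq0 => /andP[/eqP re].
case/orP=> [/eqP x_mid|/eqP //].
have y2_le0 : y ^+ 2 <= 0.
  have -> : y ^+ 2 = - discr / 4 - (x ^+ 2 - y ^+ 2 - (a + d) * x + (a * d - b * c)).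
    by rewrite /mx2_discr (_ : x = (a + d) / 2); [field | lra].
  by rewrite re; lra.
by apply/eqP; rewrite -sqrf_eq0 eq_le y2_le0 sqr_ge0.
Qed.

Lemma ceigenvalue_mx2_discr0 :
  discr = 0 -> forall l, ceigenvalue A l -> l = Complex ((a + d) / 2) 0.
Proof.
move=> discr0 l Al; have /= y0 : complex.Im l = 0 by apply: ceigenvalue_mx2_real Al; rewrite discr0.
case: l Al y0 => x y; rewrite ceigenvalue_mx2 => /andP[/eqP re _] /= y0; subst y.
have : (2 * x - (a + d)) ^+ 2 = 0.
  transitivity (4 * (x ^+ 2 - 0 ^+ 2 - (a + d) * x + (a * d - b * c)) + discr).
    by rewrite /mx2_discr; ring.
  by rewrite re discr0; ring.
by move/eqP; rewrite sqrf_eq0 => /eqP x_mid; congr Complex; lra.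
Qed.

Lemma ceigenvalue_mx2_nonreal : discr < 0 -> exists l, ceigenvalue A l /\ complex.Im l != 0.
Proof.
move=> discr_lt0; have sqrt_gt0 : 0 < Num.sqrt (- discr) by rewrite sqrtr_gt0 oppr_gt0.
exists (Complex ((a + d) / 2) (Num.sqrt (- discr) / 2)); split; last first.
  by rewrite /= mulf_neq0 ?invr_eq0 ?pnatr_eq0 ?lt0r_neq0.
rewrite ceigenvalue_mx2; apply/andP; split; apply/eqP; last by field.
by rewrite !expr_div_n sqr_sqrtr ?oppr_ge0 ?ltW // /mx2_discr; field.
Qed.

Lemma mx2_rotscale_similar : discr < 0 ->
  exists s t, exists2 T : 'M[R]_2, T \in unitmx & conjmx T A = mx2 s (- t) t s.
Proof.
move=> discr_lt0; set t := Num.sqrt (- discr) / 2.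
have tt : t * t = - discr / 4.
  by rewrite /t -expr2 expr_div_n sqr_sqrtr ?oppr_ge0 ?ltW //; field.
have t_neq0 : t != 0 by rewrite mulf_neq0 ?sqrtr_eq0 ?invr_eq0 ?pnatr_eq0 -?ltNge ?oppr_gt0.
have c_neq0 : c != 0.
  by apply: contraTneq discr_lt0 => ->; rewrite /mx2_discr mulr0 addr0 -leNgt sqr_ge0.
set T := mx2 c ((d - a) / 2) 0 t.
have uT : T \in unitmx by rewrite unitmx_mx2 mulr0 subr0 mulf_neq0.
exists ((a + d) / 2), t, T => //; apply: conjmx_eq uT _.
rewrite !mulmx_mx2; congr mx2; try by field.
by rewrite mulNr tt /mx2_discr; field.
Qed.

Lemma mx2_diag_similar : 0 < discr ->
  exists l1 l2, exists2 T : 'M[R]_2, T \in unitmx & conjmx T A = mx2 l1 0 0 l2.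
Proof.
move=> discr_gt0.
(* The rows of T are left eigenvectors for (a + d + r) / 2 and (a + d - r) / 2;
   the sign of the square root r of discr is chosen to make T invertible. *)
have [r [rr r_neq0 r_ad]] : exists r, [/\ r * r = discr, r != 0 & r + a - d != 0].
  have sqrt_gt0 : 0 < Num.sqrt discr by rewrite sqrtr_gt0.
  have sqrt_sq : Num.sqrt discr * Num.sqrt discr = discr by rewrite -expr2 sqr_sqrtr ?ltW.
  have [ad|ad] := eqVneq (Num.sqrt discr + a - d) 0; last by exists (Num.sqrt discr); rewrite lt0r_neq0.
  exists (- Num.sqrt discr); rewrite mulrNN oppr_eq0 lt0r_neq0 //; split => //.
  by apply/eqP => h; move: sqrt_gt0; lra.
have det_T : ((a + d + r) / 2 - d) * ((a + d - r) / 2 - a) - b * c = - r * (r + a - d) / 2.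
  by rewrite /mx2_discr in rr; lra.
set T := mx2 ((a + d + r) / 2 - d) b c ((a + d - r) / 2 - a).
have uT : T \in unitmx by rewrite unitmx_mx2 det_T !mulf_neq0 ?oppr_eq0 ?invr_eq0 ?pnatr_eq0.
exists ((a + d + r) / 2), ((a + d - r) / 2), T => //; apply: conjmx_eq uT _.
by rewrite !mulmx_mx2 /mx2_discr in rr *; congr mx2; lra.
Qed.

End Discriminant.

Lemma rotscale_normal_form (s t : R) (B : 'M[R]_2) :
  exists2 C : 'M[R]_2, C \in unitmx &
    conjmx C (mx2 s (- t) t s) = mx2 s (- t) t s /\
    exists x y w, conjmx C B = mx2 x (- y) y w.
Proof.
rewrite [B]mx2E; move: (B 0 0) (B 0 1) (B 1 0) (B 1 1) => x y z w.
have [yz0|yz_neq0] := eqVneq (y + z) 0.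
  exists 1%:M; first exact: unitmx1.
  by rewrite !conj1mx; split=> //; exists x, z, w; congr mx2; lra.
(* Conjugation by C = [[rho + r, u], [-u, rho + r]] rotates the traceless
   symmetric part [[r, u], [u, -r]] of B by twice the argument of C, which is
   chosen to make its off-diagonal entry vanish. *)
set r := (x - w) / 2; set u := (y + z) / 2.
set rho := Num.sqrt (r ^+ 2 + u ^+ 2).
have rho2 : rho ^+ 2 = r ^+ 2 + u ^+ 2 by rewrite sqr_sqrtr ?addr_ge0 ?sqr_ge0.
have u2_gt0 : 0 < u ^+ 2 by rewrite exprn_even_gt0 //= mulf_neq0 ?invr_eq0 ?pnatr_eq0.
have detC : (rho + r) * (rho + r) - u * - u != 0 by apply: lt0r_neq0; nra.
set C := mx2 (rho + r) u (- u) (rho + r).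
have uC : C \in unitmx by rewrite unitmx_mx2.
exists C => //; split.
  by apply: conjmx_eq => //; rewrite !mulmx_mx2; congr mx2; ring.
set Y := conjmx C _; exists (Y 0 0), (Y 1 0), (Y 1 1).
rewrite [LHS]mx2E; congr mx2.
rewrite /Y conjumx // invmx_mx2 // -scalemxAr !mulmx_mx2 !mxE /=.
apply/eqP; rewrite -addr_eq0 -mulrDr mulf_eq0; apply/orP; right; apply/eqP.
transitivity (2 * u * (rho ^+ 2 - (r ^+ 2 + u ^+ 2))); first by rewrite /r /u; field.
by rewrite rho2 subrr mulr0.
Qed.

Lemma diag_normal_form (l1 l2 : R) (B : 'M[R]_2) : B 0 1 * B 1 0 != 0 ->
  exists2 P : 'M[R]_2, P \in unitmx &
    conjmx P (mx2 l1 0 0 l2) = mx2 l1 0 0 l2 /\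
    exists x t w, conjmx P B = mx2 x t t w \/ conjmx P B = mx2 x (- t) t w.
Proof.
move=> yz_neq0; rewrite [B]mx2E.
move: (B 0 0) (B 0 1) (B 1 0) (B 1 1) yz_neq0 => x y z w.
rewrite mulf_eq0 negb_or => /andP[y_neq0 z_neq0].
(* Conjugation by diag(p, q) turns y, z into p y / q, q z / p, of equal
   absolute value once p^2 = |z| and q^2 = |y|. *)
set p := Num.sqrt `|z|; set q := Num.sqrt `|y|.
have p_neq0 : p != 0 by rewrite lt0r_neq0 ?sqrtr_gt0 ?normr_gt0.
have q_neq0 : q != 0 by rewrite lt0r_neq0 ?sqrtr_gt0 ?normr_gt0.
have uP : mx2 p 0 0 q \in unitmx by rewrite unitmx_mx2 mulr0 subr0 mulf_neq0.
exists (mx2 p 0 0 q) => //; split.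
  by apply: conjmx_eq => //; rewrite !mulmx_mx2; congr mx2; ring.
have -> : conjmx (mx2 p 0 0 q) (mx2 x y z w) = mx2 x (p * y / q) (q * z / p) w.
  by apply: conjmx_eq => //; rewrite !mulmx_mx2; congr mx2; field.
exists x, (q * z / p), w.
have balance : (p ^+ 2 * y - q ^+ 2 * z) * (p ^+ 2 * y + q ^+ 2 * z) = 0.
  rewrite !sqr_sqrtr ?normr_ge0 //.
  transitivity (`|z| ^+ 2 * y ^+ 2 - `|y| ^+ 2 * z ^+ 2); first by ring.
  by rewrite !real_normK ?num_real //; ring.
have quot e : p * y / q - e * (q * z / p) = (p ^+ 2 * y - e * q ^+ 2 * z) / (p * q).
  by field; rewrite p_neq0 q_neq0.
move/eqP: balance; rewrite mulf_eq0 => /orP[] /eqP balance; [left|right].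
  congr mx2; apply/eqP; rewrite -subr_eq0 -[q * z / p]mul1r quot.
  by rewrite mul1r balance mul0r.
congr mx2; apply/eqP; rewrite -subr_eq0 -[- (q * z / p)]mulN1r quot.
by rewrite mulN1r mulNr opprK balance mul0r.
Qed.

End RealClosed.

Theorem lemma2p10 (R : rcfType) (A1 A2 : 'M[R]_2) :
  (exists l1 l2 : R[i], [/\ l1 != l2, ceigenvalue A1 l1 & ceigenvalue A1 l2]) ->
  exists T : 'M[R]_2, T \in unitmx /\
    ((forall l : R[i], ceigenvalue A1 l -> complex.Im l = 0) ->
       \det (commmx A1 A2) != 0 ->
       exists l1 l2 s21 s22 t2 : R,
         T *m A1 *m invmx T = mx2 l1 0 0 l2 /\
         (T *m A2 *m invmx T = mx2 s21 t2 t2 s22 \/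
          T *m A2 *m invmx T = mx2 s21 (- t2) t2 s22)) /\
    ((exists l : R[i], ceigenvalue A1 l /\ complex.Im l != 0) ->
       exists s1 t1 s21 s22 t2 : R,
         T *m A1 *m invmx T = mx2 s1 (- t1) t1 s1 /\
         T *m A2 *m invmx T = mx2 s21 (- t2) t2 s22).
Proof.
rewrite [A1]mx2E; move: (A1 0 0) (A1 0 1) (A1 1 0) (A1 1 1) => a b c d.
move=> [l1 [l2 [l12 e1 e2]]].
have [discr_lt0|discr_ge0] := ltrP (mx2_discr a b c d) 0.
  have [s [t [T0 uT0 A1T0]]] := mx2_rotscale_similar discr_lt0.
  have [C uC [A1C [x [y [w A2C]]]]] := rotscale_normal_form s t (conjmx T0 A2).
  have uT : C *m T0 \in unitmx by rewrite unitmx_mul uC.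
  exists (C *m T0); rewrite -!(conjumx _ uT) !conjuMumx // A1T0 A1C; split=> //; split.
    move=> real; have [l [Al /eqP[]]] := ceigenvalue_mx2_nonreal discr_lt0.
    exact: real.
  by move=> _; exists s, t, x, w, y.
have nonreal_absurd : ~ exists l, ceigenvalue (mx2 a b c d) l /\ complex.Im l != 0.
  by case=> l [/(ceigenvalue_mx2_real discr_ge0) ->]; rewrite eqxx.
have [comm0|comm_neq0] := eqVneq (\det (commmx (mx2 a b c d) A2)) 0.
  exists 1%:M; split; first exact: unitmx1.
  by split=> [_|/nonreal_absurd[]].
have discr_gt0 : 0 < mx2_discr a b c d.
  rewrite lt_neqAle discr_ge0 andbT eq_sym; apply: contra_neq l12 => discr0.
  by rewrite (ceigenvalue_mx2_discr0 discr0 _ e1) (ceigenvalue_mx2_discr0 discr0 _ e2).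
have [l1' [l2' [T0 uT0 A1T0]]] := mx2_diag_similar discr_gt0.
have offdiag_neq0 : conjmx T0 A2 0 1 * conjmx T0 A2 1 0 != 0.
  move: comm_neq0; rewrite -(det_conjmx _ _ uT0) conjmx_commmx // A1T0 det_commmx_diag.
  by rewrite mulf_eq0 negb_or => /andP[].
have [P uP [A1P [x [t [w A2P]]]]] := diag_normal_form l1' l2' _ offdiag_neq0.
have uT : P *m T0 \in unitmx by rewrite unitmx_mul uP.
exists (P *m T0); rewrite -!(conjumx _ uT) !conjuMumx // A1T0 A1P.
by split=> //; split=> [_ _|/nonreal_absurd[]]; exists l1', l2', x, w, t.
Qed.
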